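(* Let $(M,g)$ be a Riemannian manifold of dimension $n$, with $\mathcal{T}M$, $V$, $\xi_1,\xi_2$, $\omega^1,\omega^2$, $f$ as in the context (on the open set where $F^2+K^2>0$). Then $(f,(\xi_a),(\omega^a))_{a=1,2}$ is a framed $f(3,1)$-structure on $V$, namely: (i) $\omega^a(\xi_b)=\delta^a_b$, $f(\xi_a)=0$ and $\omega^a\circ f=0$ for $a,b\in\{1,2\}$; (ii) $f^2(X)=-X+\omega^1(X)\xi_1+\omega^2(X)\xi_2$ for every $X\in\Gamma(V)$; (iii) $f$ has rank $2n-2$ and $f^3+f=0$.
   Context: Let $M$ be an $n$-dimensional smooth manifold with a Riemannian metric $g=(g_{ij})$, with inverse matrix $(g^{ij})$; summation convention is used. The big-tangent manifold $\mathcal{T}M$ is the total space of $TM\oplus T^*M\to M$, with local coordinates $(x^i,y^i,p_i)$ (the point $y^i\frac{\partial}{\partial x^i}|_x+p_i\,dx^i|_x$). The vertical bundle $V\subset T\mathcal{T}M$ is tangent to the fibres, locally spanned by $\{\frac{\partial}{\partial y^i},\frac{\partial}{\partial p_i}\}$. Put $y_i=g_{ij}y^j$, $p^i=g^{ij}p_j$, $F^2=g_{ij}y^iy^j$, $K^2=g^{ij}p_ip_j$; all objects are considered where $F^2+K^2>0$. $\phi:V\to V$ is given by $\phi(\frac{\partial}{\partial y^i})=-g_{ij}\frac{\partial}{\partial p_j}$, $\phi(\frac{\partial}{\partial p_i})=g^{ij}\frac{\partial}{\partial y^j}$. $\xi_2=\frac{1}{\sqrt{F^2+K^2}}(y^i\frac{\partial}{\partial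 y^i}+p_i\frac{\partial}{\partial p_i})$, $\xi_1=\frac{1}{\sqrt{F^2+K^2}}(p^i\frac{\partial}{\partial y^i}-y_i\frac{\partial}{\partial p_i})$. $\omega^1,\omega^2\in\Gamma(V^* )$: $\omega^1(\frac{\partial}{\partial y^i})=\frac{p_i}{\sqrt{F^2+K^2}}$, $\omega^1(\frac{\partial}{\partial p_i})=-\frac{y^i}{\sqrt{F^2+K^2}}$, $\omega^2(\frac{\partial}{\partial y^i})=\frac{y_i}{\sqrt{F^2+K^2}}$, $\omega^2(\frac{\partial}{\partial p_i})=\frac{p^i}{\sqrt{F^2+K^2}}$. $f:V\to V$ is defined by $f(X)=\phi(X)-\omega^2(X)\xi_1+\omega^1(X)\xi_2$. *)

(* Pointwise (fibrewise) linear-algebra model of the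
   vertical bundle V of the big-tangent manifold. *)
From HB Require Import structures.
From mathcomp Require Import all_boot all_order all_algebra.
Set Implicit Arguments. Unset Strict Implicit. Unset Printing Implicit Defensive.
Import Order.TTheory GRing.Theory Num.Theory.
Local Open Scope ring_scope.

Section BigTangent.
Variables (R : rcfType) (n : nat).
(* g = (g_ij) the metric at the base point x; y = (y^i), p = (p_i) the fibre
   coordinates of the point (x,y,p) of TM (+) T*M. *)
Variables (g : 'M[R]_n) (y p : 'cV[R]_n).

(* A vertical vector X = X^i d/dy^i + X_i d/dp_i is the column col_mx a b,
   with a = (X^i), b = (X_i). *)
Definition ginv : 'M[R]_n := invmx g.
Definition ylow : 'cV[R]_n := g *m y.
Definition pup  : 'cV[R]_n := ginv *m p.
Definition F2 : R := (y^T *m g *m y) 0 0.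
Definition K2 : R := (p^T *m ginv *m p) 0 0.
Definition nrm : R := Num.sqrt (F2 + K2).

(* phi(d/dy^i) = - g_ij d/dp_j ,  phi(d/dp_i) = g^ij d/dy^j  (matrix acting on columns) *)
Definition phi_mx : 'M[R]_(n + n) := block_mx 0 ginv^T (- g^T) 0.

Definition xi1 : 'cV[R]_(n + n) := nrm^-1 *: col_mx pup (- ylow).
Definition xi2 : 'cV[R]_(n + n) := nrm^-1 *: col_mx y p.

Definition omega1_row : 'rV[R]_(n + n) := nrm^-1 *: row_mx p^T (- y^T).
Definition omega2_row : 'rV[R]_(n + n) := nrm^-1 *: row_mx ylow^T pup^T.

Definition omega1 (X : 'cV[R]_(n + n)) : R := (omega1_row *m X) 0 0.
Definition omega2 (X : 'cV[R]_(n + n)) : R := (omega2_row *m X) 0 0.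
Definition phi (X : 'cV[R]_(n + n)) : 'cV[R]_(n + n) := phi_mx *m X.

Definition f_mx : 'M[R]_(n + n) :=
  phi_mx - xi1 *m omega2_row + xi2 *m omega1_row.
Definition f (X : 'cV[R]_(n + n)) : 'cV[R]_(n + n) := f_mx *m X.


End BigTangent.

Definition riemannian_metric (R : rcfType) (n : nat) (g : 'M[R]_n) : Prop :=
  g^T = g /\ forall v : 'cV[R]_n, v != 0 -> 0 < (v^T *m g *m v) 0 0.

From HB Require Import structures.
From mathcomp Require Import all_boot all_order all_algebra.
From mathcomp Require Import zify.
Import Order.TTheory GRing.Theory Num.Theory.
Set Implicit Arguments. Unset Strict Implicit.
Local Open Scope ring_scope.

(* The endomorphism [phi] is a complex structure on [V] ([phi^2 = -1] because
   [(g^ij)] inverts [(g_ij)]) mapping [xi2 |-> xi1 |-> -xi2] and pulling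
   [omega1] back to [omega2] and [omega2] back to [-omega1]; the coframe is
   dual to the frame because both diagonal pairings equal
   [(F^2 + K^2) / (F^2 + K^2)].  For any such adapted frame,
   [f = phi - xi1 omega2 + xi2 omega1] kills the frame and is killed by the
   coframe, whence [f^2 = phi f = -1 + xi1 omega1 + xi2 omega2] and
   [f^3 = -f].  So [-f^2] is the projection along the 2-plane spanned by
   [xi1, xi2], and [f], having the rank of [f^2], has rank [2n - 2]. *)

Lemma trmx_mx11 (R : ringType) (A : 'M[R]_1) : A^T = A.
Proof. by rewrite [A]mx11_scalar tr_scalar_mx. Qed.

Lemma trmx_mulC (R : comRingType) (k : nat) (a b : 'cV[R]_k) :
  a^T *m b = b^T *m a.
Proof. by rewrite -[LHS]trmx_mx11 trmx_mul trmxK. Qed.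

Lemma mul_col_mx11 (R : comRingType) (k : nat) (c : 'cV[R]_k) (M : 'M[R]_1) :
  c *m M = M 0 0 *: c.
Proof. by rewrite {1}[M]mx11_scalar mul_mx_scalar. Qed.

Section AdaptedFrame.
Variables (R : fieldType) (m : nat).

Record adapted_frame (Phi : 'M[R]_m) (xi1 xi2 : 'cV[R]_m) (om1 om2 : 'rV[R]_m)
    : Prop := AdaptedFrame {
  phi_sqr : Phi *m Phi = - 1%:M;
  phi_xi1 : Phi *m xi1 = - xi2;
  phi_xi2 : Phi *m xi2 = xi1;
  om1_phi : om1 *m Phi = om2;
  om2_phi : om2 *m Phi = - om1;
  om1_xi1 : om1 *m xi1 = 1%:M;
  om1_xi2 : om1 *m xi2 = 0;
  om2_xi1 : om2 *m xi1 = 0;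
  om2_xi2 : om2 *m xi2 = 1%:M
}.

Variables (Phi : 'M[R]_m) (xi1 xi2 : 'cV[R]_m) (om1 om2 : 'rV[R]_m).
Hypothesis fr : adapted_frame Phi xi1 xi2 om1 om2.

Definition framed_mx : 'M[R]_m := Phi - xi1 *m om2 + xi2 *m om1.

Lemma framed_mx_xi1 : framed_mx *m xi1 = 0.
Proof.
rewrite !mulmxDl mulNmx -!mulmxA (phi_xi1 fr) (om2_xi1 fr) (om1_xi1 fr).
by rewrite mulmx0 mulmx1 subr0 addNr.
Qed.

Lemma framed_mx_xi2 : framed_mx *m xi2 = 0.
Proof.
rewrite !mulmxDl mulNmx -!mulmxA (phi_xi2 fr) (om2_xi2 fr) (om1_xi2 fr).
by rewrite mulmx0 mulmx1 addr0 subrr.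
Qed.

Lemma om1_framed_mx : om1 *m framed_mx = 0.
Proof.
rewrite !mulmxDr mulmxN !mulmxA (om1_phi fr) (om1_xi1 fr) (om1_xi2 fr).
by rewrite mul1mx mul0mx addr0 subrr.
Qed.

Lemma om2_framed_mx : om2 *m framed_mx = 0.
Proof.
rewrite !mulmxDr mulmxN !mulmxA (om2_phi fr) (om2_xi1 fr) (om2_xi2 fr).
by rewrite mul1mx mul0mx subr0 addNr.
Qed.

Lemma framed_mx_sqr :
  framed_mx *m framed_mx = - 1%:M + xi1 *m om1 + xi2 *m om2.
Proof.
rewrite {1}/framed_mx !mulmxDl mulNmx -!mulmxA om1_framed_mx om2_framed_mx.
rewrite !mulmx0 subr0 addr0 /framed_mx !mulmxDr mulmxN !mulmxA.
by rewrite (phi_sqr fr) (phi_xi1 fr) (phi_xi2 fr) mulNmx opprK addrAC.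
Qed.

Lemma framed_mx_cube : framed_mx *m framed_mx *m framed_mx = - framed_mx.
Proof.
rewrite -mulmxA framed_mx_sqr !mulmxDr mulmxN mulmx1 !mulmxA.
by rewrite framed_mx_xi1 framed_mx_xi2 !mul0mx !addr0.
Qed.

Lemma mxrank_framed_mx : \rank framed_mx = (m - 2)%N.
Proof.
set F := framed_mx; set U := row_mx xi1 xi2; set W := col_mx om1 om2.
have WU : W *m U = 1%:M.
  by rewrite mul_col_row (om1_xi1 fr) (om1_xi2 fr) (om2_xi1 fr) (om2_xi2 fr)
             -scalar_mx_block.
have rankU : \rank U = 2%N.
  by apply/eqP; rewrite eqn_leq rank_leq_col -{1}(mxrank1 R 2) -WU mxrankM_maxr.
have rankF : \rank F = \rank (F *m F).
  apply/eqP; rewrite eqn_leq mxrankM_maxl andbT.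
  by rewrite -mxrank_opp -framed_mx_cube mxrankM_maxl.
have FFU : F *m F *m U = 0.
  by rewrite -mulmxA mul_mx_row framed_mx_xi1 framed_mx_xi2 row_mx0 mulmx0.
have one_split : 1%:M = U *m W - F *m F.
  apply/eqP; rewrite framed_mx_sqr mul_row_col eq_sym subr_eq.
  by rewrite !addrA subrr add0r.
have rank_lb : (m <= 2 + \rank (F *m F))%N.
  rewrite -{1}(mxrank1 R m) one_split -rankU -(mxrank_opp (F *m F)).
  exact: leq_trans (mxrank_add _ _) (leq_add (mxrankM_maxl _ _) (leqnn _)).
have := mxrank_mul_min (F *m F) U; rewrite FFU mxrank0 rankU.
lia.
Qed.

End AdaptedFrame.

Lemma riemannian_metric_unit (R : rcfType) (n : nat) (g : 'M[R]_n) :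
  riemannian_metric g -> g \in unitmx.
Proof.
case=> _ g_pos; rewrite unitmxE unitfE; apply/negP => /det0P [v v_neq0 vg0].
by have := g_pos v^T; rewrite trmx_eq0 trmxK vg0 mul0mx mxE ltxx => /(_ v_neq0).
Qed.

Section BigTangentFrame.
Variables (R : rcfType) (n : nat) (g : 'M[R]_n) (y p : 'cV[R]_n).
Hypotheses (g_sym : g^T = g) (g_unit : g \in unitmx).

Lemma ginv_sym : (ginv g)^T = ginv g.
Proof. by rewrite /ginv trmx_inv g_sym. Qed.

Lemma phi_mx_sqr : phi_mx g *m phi_mx g = - 1%:M.
Proof.
rewrite /phi_mx mulmx_block !mulmx0 !mul0mx !addr0 !add0r ginv_sym g_sym.
rewrite mulmxN mulNmx /ginv mulmxV // mulVmx //.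
by rewrite (scalar_mx_block n n) opp_block_mx !oppr0.
Qed.

Lemma phi_mx_xi1 : phi_mx g *m xi1 g y p = - xi2 g y p.
Proof.
rewrite /xi1 /xi2 -scalemxAr /phi_mx mul_block_col !mul0mx addr0 add0r.
rewrite ginv_sym g_sym mulNmx mulmxN /ylow /pup !mulmxA mulmxV // mulVmx //.
by rewrite !mul1mx -scalerN opp_col_mx.
Qed.

Lemma phi_mx_xi2 : phi_mx g *m xi2 g y p = xi1 g y p.
Proof.
rewrite /xi1 /xi2 -scalemxAr /phi_mx mul_block_col !mul0mx addr0 add0r.
by rewrite ginv_sym g_sym mulNmx.
Qed.

Lemma omega1_phi_mx : omega1_row g y p *m phi_mx g = omega2_row g y p.
Proof.
rewrite /omega1_row /omega2_row -scalemxAl /phi_mx mul_row_block.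
rewrite !mulmx0 addr0 add0r /ylow /pup !trmx_mul ginv_sym g_sym.
by rewrite mulNmx mulmxN opprK.
Qed.

Lemma omega2_phi_mx : omega2_row g y p *m phi_mx g = - omega1_row g y p.
Proof.
rewrite /omega1_row /omega2_row -scalemxAl /phi_mx mul_row_block.
rewrite !mulmx0 addr0 add0r /ylow /pup !trmx_mul ginv_sym g_sym mulmxN.
by rewrite -!mulmxA mulmxV // mulVmx // !mulmx1 -scalerN opp_row_mx opprK.
Qed.

Hypothesis nondeg : 0 < F2 g y + K2 g p.

Lemma scaled_quad_sum :
  (nrm g y p)^-1 * (nrm g y p)^-1 *: (y^T *m g *m y + p^T *m ginv g *m p)
  = 1%:M.
Proof.
have nrm_neq0 : nrm g y p != 0 by rewrite sqrtr_eq0 -ltNge.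
rewrite [_ + _]mx11_scalar mxE scale_scalar_mx -/(F2 g y) -/(K2 g p).
rewrite -(sqr_sqrtr (ltW nondeg)) -/(nrm g y p).
by rewrite -expr2 -exprMn mulVf // expr1n.
Qed.

Lemma omega_xi_dual :
  [/\ omega1_row g y p *m xi1 g y p = 1%:M, omega1_row g y p *m xi2 g y p = 0,
      omega2_row g y p *m xi1 g y p = 0 & omega2_row g y p *m xi2 g y p = 1%:M].
Proof.
rewrite /omega1_row /omega2_row /xi1 /xi2 -!scalemxAl -!scalemxAr !scalerA.
rewrite !mul_row_col /ylow /pup !trmx_mul ginv_sym g_sym !mulmxN !mulNmx opprK.
rewrite /ginv -!mulmxA mulKVmx // mulKmx // !mulmxA (trmx_mulC p y) subrr.
by rewrite [_ + y^T *m _ *m _]addrC scaled_quad_sum scaler0.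
Qed.

End BigTangentFrame.

Lemma big_tangent_adapted_frame (R : rcfType) (n : nat) (g : 'M[R]_n)
    (y p : 'cV[R]_n) :
  riemannian_metric g -> 0 < F2 g y + K2 g p ->
  adapted_frame (phi_mx g) (xi1 g y p) (xi2 g y p)
                (omega1_row g y p) (omega2_row g y p).
Proof.
move=> /[dup] /riemannian_metric_unit g_unit [g_sym _] nondeg.
have [o11 o12 o21 o22] := omega_xi_dual g_sym g_unit nondeg.
by split=> //; [exact: phi_mx_sqr | exact: phi_mx_xi1 | exact: phi_mx_xi2
                | exact: omega1_phi_mx | exact: omega2_phi_mx].
Qed.

Theorem theorem5p1 (R : rcfType) (n : nat) (g : 'M[R]_n) (y p : 'cV[R]_n) :
  riemannian_metric g ->
  0 < F2 g y + K2 g p ->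
  (* (i) *)
  ((omega1 g y p (xi1 g y p) = 1 /\ omega1 g y p (xi2 g y p) = 0 /\
    omega2 g y p (xi1 g y p) = 0 /\ omega2 g y p (xi2 g y p) = 1) /\
   (f g y p (xi1 g y p) = 0 /\ f g y p (xi2 g y p) = 0) /\
   (forall X, omega1 g y p (f g y p X) = 0) /\
   (forall X, omega2 g y p (f g y p X) = 0)) /\
  (* (ii) *)
  (forall X, f g y p (f g y p X) =
     - X + omega1 g y p X *: xi1 g y p + omega2 g y p X *: xi2 g y p) /\
  (* (iii) *)
  \rank (f_mx g y p) = (n + n - 2)%N /\
  (forall X, f g y p (f g y p (f g y p X)) + f g y p X = 0).
Proof.
move=> rg nondeg; have fr := big_tangent_adapted_frame rg nondeg.
rewrite /f /omega1 /omega2.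
split; [split; [|split; [|split]] | split; [|split]].
- by rewrite (om1_xi1 fr) (om1_xi2 fr) (om2_xi1 fr) (om2_xi2 fr) !mxE.
- by rewrite (framed_mx_xi1 fr) (framed_mx_xi2 fr).
- by move=> X; rewrite mulmxA (om1_framed_mx fr) mul0mx mxE.
- by move=> X; rewrite mulmxA (om2_framed_mx fr) mul0mx mxE.
- move=> X; rewrite mulmxA (framed_mx_sqr fr) !mulmxDl mulNmx mul1mx.
  by rewrite -!mulmxA !mul_col_mx11.
- exact: mxrank_framed_mx fr.
- by move=> X; rewrite !mulmxA (framed_mx_cube fr) mulNmx addNr.
Qed.
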